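(* Let $A=(a_{i,j})$ be an $n\times n$ matrix with indeterminate entries. Let $A'=(a'_{i,j})$ be the matrix obtained from $A$ by replacing the entries $a_{i,n}$ of its last column by entries $\tilde a_{i,n}$ (rational functions of the $a_{k,\ell}$) such that for every $1\le k\le n$ \[ \det\begin{pmatrix} a_{k,k}&\cdots&a_{k,n-1}&\tilde a_{k,n}\\ \vdots&&\vdots&\vdots\\ a_{n,k}&\cdots&a_{n,n-1}&\tilde a_{n,n}\end{pmatrix}=(-1)^{n-k}\,a_{k,n}\,\det\begin{pmatrix} a_{k+1,k}&\cdots&a_{k+1,n-1}\\ \vdots&&\vdots\\ a_{n,k}&\cdots&a_{n,n-1}\end{pmatrix}.\] Let $A''=(a''_{i,j})$ be the $n\times(n-1)$ matrix obtained from $A$ by removing its last column. Then for every $1\le i\le n-1$, \[ \frac{\det\big((a'_{k,\ell})_{k\ge i,\,k\ne i+1;\ \ell>i}\big)}{\det\big((a'_{k,\ell})_{k,\ell>i}\big)}=\frac{a_{i,n}}{a_{i+1,n}}+\frac{\det\big((a''_{k,\ell})_{k\ge i,\,k\ne i+1;\ \ell>i-1}\big)}{\det\big((a''_{k,\ell})_{k>i;\ \ell>i-1}\big)} .\]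
   Context: Submatrices are formed with the indicated row and column index sets taken in increasing order; the determinant of an empty matrix is $1$. The identities are identities of rational functions in the indeterminates $a_{i,j}$. *)

From HB Require Import structures.
From mathcomp Require Import all_boot all_order all_algebra.
From mathcomp Require Import fraction.
From mathcomp Require Import mpoly.
Set Implicit Arguments. Unset Strict Implicit. Unset Printing Implicit Defensive.
Import GRing.Theory.
Local Open Scope ring_scope.

Definition ratfun (n : nat) := {fraction {mpoly rat[n * n]}}.

(* The indeterminate a_{i,j}, with 1-based indices 1 <= i, j <= n
   (stored as variable number (i-1)*n + (j-1)). *)
Definition indet (n i j : nat) : ratfun n :=
  @FracField.tofrac _
    (match (insub ((i.-1) * n + j.-1)%N : option 'I_(n * n)) with
     | Some v => 'X_v
     | None => 0 (* never used: only 1 <= i, j <= n occur *)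
     end : {mpoly rat[n * n]}).

(* Determinant of the submatrix of the (nat-indexed) matrix f with row
   indices rs and column indices cs (listed in increasing order);
   only used when size rs = size cs.  The empty determinant is 1. *)
Definition subdet (K : comNzRingType) (f : nat -> nat -> K) (rs cs : seq nat) : K :=
  \det (\matrix_(i < size rs, j < size rs) f (nth 0%N rs i) (nth 0%N cs j)).

(* The identity is the Desnanot-Jacobi (Sylvester) identity
     det M * det M_{01}^{0,last} = det M_0^0 * det M_1^last - det M_0^last * det M_1^0
   (subscripts: deleted rows, superscripts: deleted columns), applied to the
   trailing block of A' on the rows and columns i..n.  Its two principal minors are
   given by the defining property of the entries ~a_{k,n}, and the minors avoiding
   column n are minors of A''; solving the resulting relation for the wanted ratio
   gives the formula.  Jacobi's identity follows by multiplying M with the identity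
   matrix whose first and last columns are replaced by the first two columns of
   adj M.  The minors of A'' that are divided by do not vanish: sending the
   subdiagonal indeterminates to 1 and all others to 0 turns them into identity
   determinants. *)

From mathcomp Require Import all_boot all_order all_algebra.
From mathcomp Require Import fraction mpoly.
From mathcomp Require Import ring zify.
Set Implicit Arguments. Unset Strict Implicit. Unset Printing Implicit Defensive.
Import GRing.Theory.
Local Open Scope ring_scope.

Lemma det_scaled_unit_col (R : comNzRingType) k (B : 'M[R]_k) j r a :
  (forall x, B x j = a * (x == r)%:R) -> \det B = a * cofactor B r j.
Proof.
move=> Bj; rewrite (expand_det_col B j) (bigD1 r) //= big1 ?addr0 => [|x /negbTE xr].
  by rewrite Bj eqxx mulr1.
by rewrite Bj xr mulr0 mul0r.
Qed.

Lemma det_unit_inner_cols (R : comNzRingType) p (B : 'M[R]_p.+2) :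
  (forall x y : 'I_p.+2, y != ord0 -> y != ord_max -> B x y = (x == y)%:R) ->
  \det B = B ord0 ord0 * B ord_max ord_max - B ord0 ord_max * B ord_max ord0.
Proof.
elim: p B => [|p IHp] B Bunit.
  rewrite (expand_det_col B ord0) !big_ord_recl big_ord0 /cofactor !det_mx11 !mxE /=.
  rewrite addr0 expr0 mul1r expr1 mulN1r mulrN [B (lift _ _) _ * _]mulrC.
  by congr (_ * B _ _ - B _ _ * B _ _); apply/val_inj.
rewrite (@det_scaled_unit_col _ _ B (lift ord0 ord0) (lift ord0 ord0) 1) => [|x]; last first.
  by rewrite Bunit ?mul1r.
rewrite mul1r /cofactor /= expr2 mulrNN mulr1 mul1r IHp => [|x y y0 ym]; last first.
  rewrite !mxE Bunit ?(inj_eq lift_inj) //; move: y0 ym.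
    by rewrite -!(inj_eq val_inj) /= /bump; case: y => -[|y].
  by rewrite -!(inj_eq val_inj) /= /bump; case: y => -[|y].
by rewrite !mxE; congr (B _ _ * B _ _ - B _ _ * B _ _); apply/val_inj.
Qed.

Lemma inord1_val p : nat_of_ord (inord 1%N : 'I_p.+2) = 1%N.
Proof. by rewrite inordK. Qed.

Section DesnanotJacobi.

Variables (F : fieldType) (p : nat) (M : 'M[F]_p.+2).

Local Notation minor i j := (\det (row' i (col' j M))).

Definition adj_cols_mx : 'M[F]_p.+2 := \matrix_(x, y)
  if y == ord0 then \adj M x ord0
  else if y == ord_max then \adj M x (inord 1%N) else (x == y)%:R.

Lemma det_adj_cols_mx : \det adj_cols_mx =
  (-1) ^+ p * (minor ord0 ord0 * minor (inord 1%N) ord_max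
               - minor ord0 ord_max * minor (inord 1%N) ord0).
Proof.
rewrite det_unit_inner_cols => [|x y y0 ym]; last by rewrite mxE (negbTE y0) (negbTE ym).
rewrite !mxE !eqxx /= /cofactor /= inord1_val /= !addn0 add0n expr0 !mul1r !exprS.
ring.
Qed.

Lemma mul_adj_cols_mx : M *m adj_cols_mx = \matrix_(x, y)
  if y == ord0 then \det M * (x == ord0)%:R
  else if y == ord_max then \det M * (x == inord 1%N)%:R else M x y.
Proof.
apply/matrixP => x y; have adjE j : \sum_z M x z * \adj M z j = \det M * (x == j)%:R.
  by have := congr1 (fun B : 'M_p.+2 => B x j) (mul_mx_adj M); rewrite !mxE mulr_natr.
rewrite !mxE; case: eqVneq => [->|y0].
  by rewrite -adjE; apply: eq_bigr => z _; rewrite mxE eqxx.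
case: eqVneq => [yM|ym].
  by rewrite -adjE; apply: eq_bigr => z _; rewrite mxE (negbTE y0) yM eqxx.
rewrite (bigD1 y) //= big1 ?addr0 => [|z zy]; rewrite mxE (negbTE y0) (negbTE ym).
  by rewrite eqxx mulr1.
by rewrite (negbTE zy) mulr0.
Qed.

Lemma det_mul_adj_cols_mx : \det (M *m adj_cols_mx) =
  (-1) ^+ p * \det M ^+ 2 * \det (row' ord0 (row' ord0 (col' ord0 (col' ord_max M)))).
Proof.
rewrite (@det_scaled_unit_col _ _ _ ord0 ord0 (\det M)); last first.
  by move=> x; rewrite mul_adj_cols_mx mxE eqxx.
rewrite /cofactor /= expr0 mul1r (@det_scaled_unit_col _ _ _ ord_max ord0 (\det M)).
  rewrite /cofactor add0n mulrA -expr2 mulrCA mulrA; congr (_ * \det _).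
  apply/matrixP => x y; rewrite mul_adj_cols_mx !mxE.
  rewrite -!(inj_eq val_inj) /= inord1_val /bump /=.
  have yp : (y < p)%N := ltn_ord y.
  rewrite ifF; last by apply/eqP; rewrite /=; lia.
  by congr (M _ _); apply: val_inj; rewrite /= /bump /=; lia.
move=> x; rewrite mul_adj_cols_mx !mxE.
have -> : lift ord0 (ord_max : 'I_p.+1) = ord_max by apply/val_inj.
by rewrite eqxx -!(inj_eq val_inj) /= inord1_val.
Qed.

Theorem desnanot_jacobi : \det M != 0 ->
  \det M * \det (row' ord0 (row' ord0 (col' ord0 (col' ord_max M)))) =
  minor ord0 ord0 * minor (inord 1%N) ord_max - minor ord0 ord_max * minor (inord 1%N) ord0.
Proof.
move=> detM0; have := det_mulmx M adj_cols_mx.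
rewrite det_mul_adj_cols_mx det_adj_cols_mx expr2 mulrCA -!mulrA.
have sign0 : (-1) ^+ p != 0 :> F by rewrite signr_eq0.
by move=> /(mulfI detM0)/(mulfI sign0).
Qed.

End DesnanotJacobi.

Lemma subdet_eq_in (K : comNzRingType) (f g : nat -> nat -> K) rs cs :
  size cs = size rs -> {in rs & cs, f =2 g} -> subdet f rs cs = subdet g rs cs.
Proof.
move=> size_cs fg; congr (\det _); apply/matrixP => x y; rewrite !mxE.
by apply: fg; apply: mem_nth; rewrite ?size_cs.
Qed.

Lemma subdet_mx (K : comNzRingType) k (B : 'M[K]_k) (f : nat -> nat -> K) rs cs :
  size rs = k -> size cs = k ->
  (forall x y : 'I_k, f (nth 0%N rs x) (nth 0%N cs y) = B x y) -> subdet f rs cs = \det B.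
Proof.
move=> size_rs size_cs fB; rewrite /subdet; move: (size_rs) => ->.
by congr (\det _); apply/matrixP => x y; rewrite mxE fB.
Qed.

Lemma nth_cons_iota2 i p (x : 'I_p.+1) :
  nth 0%N (i :: iota i.+2 p) x = (i + lift (inord 1%N : 'I_p.+2) x)%N.
Proof. by case: x => -[|x] xp; rewrite /= /bump inord1_val //= ?nth_iota; lia. Qed.

Lemma subdet_desnanot_jacobi (F : fieldType) (f : nat -> nat -> F) i p :
  subdet f (iota i p.+2) (iota i p.+2) != 0 ->
  subdet f (iota i p.+2) (iota i p.+2) * subdet f (iota i.+2 p) (iota i.+1 p) =
  subdet f (iota i.+1 p.+1) (iota i.+1 p.+1) * subdet f (i :: iota i.+2 p) (iota i p.+1) -
  subdet f (iota i.+1 p.+1) (iota i p.+1) * subdet f (i :: iota i.+2 p) (iota i.+1 p.+1).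
Proof.
pose M := \matrix_(x < p.+2, y < p.+2) f (i + x)%N (i + y)%N.
have sizes k j : size (iota j k) = k by rewrite size_iota.
have size_cons : size (i :: iota i.+2 p) = p.+1 by rewrite /= size_iota.
rewrite (subdet_mx (B := M)) ?sizes // => [|x y]; last by rewrite mxE !nth_iota.
rewrite (subdet_mx (B := row' ord0 (row' ord0 (col' ord0 (col' ord_max M)))))
  ?sizes //; last first.
  by move=> x y; rewrite !mxE !nth_iota // !lift0 lift_max lift0 !addSnnS.
rewrite (subdet_mx (B := row' ord0 (col' ord0 M))) ?sizes //; last first.
  by move=> x y; rewrite !mxE !nth_iota // !lift0 !addSnnS.
rewrite (subdet_mx (B := row' (inord 1%N) (col' ord_max M))) ?sizes //; last first.
  by move=> x y; rewrite !mxE nth_cons_iota2 nth_iota // lift_max.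
rewrite (subdet_mx (B := row' ord0 (col' ord_max M))) ?sizes //; last first.
  by move=> x y; rewrite !mxE !nth_iota // lift0 lift_max addSnnS.
rewrite (subdet_mx (B := row' (inord 1%N) (col' ord0 M))) ?sizes //; last first.
  by move=> x y; rewrite !mxE nth_cons_iota2 nth_iota // lift0 addSnnS.
exact: desnanot_jacobi.
Qed.

Lemma jacobi_ratio (F : fieldType) k (x0 x1 P Q R X : F) : x1 != 0 -> P != 0 -> Q != 0 ->
  (-1) ^+ k.+1 * x0 * P * Q = (-1) ^+ k * x1 * Q * R - P * X ->
  X / ((-1) ^+ k * x1 * Q) = x0 / x1 + R / P.
Proof.
move=> x1_0 P0 Q0 jacobi.
have PX : P * X = (-1) ^+ k * x1 * Q * R - (-1) ^+ k.+1 * x0 * P * Q by rewrite jacobi; ring.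
rewrite -[X](mulKf P0) PX exprS; field.
by rewrite P0 x1_0 Q0 signr_eq0.
Qed.

Definition indet_poly n r c : {mpoly rat[n * n]} :=
  match (insub ((r.-1) * n + c.-1)%N : option 'I_(n * n)) with
  | Some v => 'X_v
  | None => 0
  end.

Lemma indet_polyE n r c : indet n r c = tofrac (indet_poly n r c).
Proof. by []. Qed.

Lemma indet_polyX n r c : (1 <= r <= n)%N -> (1 <= c <= n)%N ->
  exists2 v : 'I_(n * n), indet_poly n r c = 'X_v & val v = ((r.-1) * n + c.-1)%N.
Proof.
move=> /andP[r1 rn] /andP[c1 cn]; rewrite /indet_poly; case: insubP => [v _ val_v | ].
  by exists v.
by case/negP; nia.
Qed.

Lemma indet_neq0 n r c : (1 <= r <= n)%N -> (1 <= c <= n)%N -> indet n r c != 0.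
Proof.
move=> rn cn; rewrite indet_polyE tofrac_eq0; have [v -> _] := indet_polyX rn cn.
apply/eqP => /(congr1 (meval (fun=> 1 : rat))).
by rewrite mevalXU meval0 => /eqP; rewrite oner_eq0.
Qed.

Lemma subdet_indet_subdiag_neq0 n c m : (1 <= c)%N -> (c + m <= n)%N ->
  subdet (indet n) (iota c.+1 m) (iota c m) != 0.
Proof.
move=> c1 cmn.
pose B := \matrix_(x < m, y < m) indet_poly n (c.+1 + x) (c + y).
(* Variable v stands for a_{v %/ n + 1, v %% n + 1}: subdiag_pt is 1 exactly on a_{r+1,r}. *)
pose subdiag_pt (v : 'I_(n * n)) : rat := ((v %/ n)%N == (v %% n).+1)%:R.
rewrite (subdet_mx (B := map_mx (@tofrac _) B)) ?size_iota // => [|x y]; last first.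
  by rewrite !mxE !nth_iota.
rewrite det_map_mx tofrac_eq0; apply/eqP => /(congr1 (meval subdiag_pt)).
rewrite meval0 -det_map_mx.
suff -> : map_mx (meval subdiag_pt) B = 1%:M.
  by rewrite det1 => /eqP; rewrite oner_eq0.
apply/matrixP => x y; have xm := ltn_ord x; have ym := ltn_ord y; rewrite !mxE.
have row_x : (1 <= c.+1 + x <= n)%N by apply/andP; split; lia.
have col_y : (1 <= c + y <= n)%N by apply/andP; split; lia.
have [v -> val_v] := indet_polyX row_x col_y.
rewrite mevalXU /subdiag_pt val_v /= divnMDl; last by lia.
rewrite divn_small; last by lia.
rewrite modnMDl modn_small; last by lia.
by rewrite addn0 (_ : (c + y).-1.+1 = c + y)%N ?eqn_add2l //; lia.
Qed.

Theorem lemma4p3 (n : nat) (at_ : nat -> ratfun n) :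
  let a := indet n in
  let a' := fun k l => if l == n then at_ k else a k l in
  let a'' := a in
  (forall k, (1 <= k <= n)%N ->
     subdet a' (iota k (n - k).+1) (iota k (n - k).+1) =
     (-1) ^+ (n - k) * a k n * subdet a (iota k.+1 (n - k)) (iota k (n - k))) ->
  forall i, (1 <= i <= n - 1)%N ->
    subdet a' (i :: iota i.+2 (n - i - 1)) (iota i.+1 (n - i)) /
      subdet a' (iota i.+1 (n - i)) (iota i.+1 (n - i)) =
    a i n / a i.+1 n +
    subdet a'' (i :: iota i.+2 (n - i - 1)) (iota i (n - i)) /
      subdet a'' (iota i.+1 (n - i)) (iota i (n - i)).
Proof.
move=> a a' a'' tildeE i /andP[i1 in1]; rewrite {}/a''.
have [p n_i] : exists p, (n - i)%N = p.+1 by exists (n - i).-1; lia.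
have [n_i1 n_i2] : (n - i - 1 = p)%N /\ (n - i.+1 = p)%N by lia.
rewrite n_i1 n_i.
set P := subdet a (iota i.+1 p.+1) (iota i p.+1).
set Q := subdet a (iota i.+2 p) (iota i.+1 p).
set R := subdet a (i :: iota i.+2 p) (iota i p.+1).
set X := subdet a' (i :: iota i.+2 p) (iota i.+1 p.+1).
have Di : subdet a' (iota i p.+2) (iota i p.+2) = (-1) ^+ p.+1 * a i n * P.
  by rewrite /P -n_i tildeE //; lia.
have Di1 : subdet a' (iota i.+1 p.+1) (iota i.+1 p.+1) = (-1) ^+ p * a i.+1 n * Q.
  by rewrite /Q -n_i2 tildeE //; lia.
have a'E rs j m : size rs = m -> (j + m <= n)%N ->
    subdet a' rs (iota j m) = subdet a rs (iota j m).
  move=> size_rs jmn; apply: subdet_eq_in => [|x y _]; first by rewrite size_iota.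
  by rewrite mem_iota /a' => jy; rewrite ifF //; apply/eqP; lia.
have P0 : P != 0 by apply: subdet_indet_subdiag_neq0; lia.
have Q0 : Q != 0 by apply: subdet_indet_subdiag_neq0; lia.
have ain0 : a i n != 0 by apply: indet_neq0; lia.
have ai1n0 : a i.+1 n != 0 by apply: indet_neq0; lia.
have sign0 : (-1) ^+ p.+1 != 0 :> ratfun n by rewrite signr_eq0.
have Di0 : subdet a' (iota i p.+2) (iota i p.+2) != 0.
  by rewrite Di (mulf_neq0 (mulf_neq0 sign0 ain0) P0).
have size_cons : size (i :: iota i.+2 p) = p.+1 by rewrite /= size_iota.
have [i1p ip1] : (i.+1 + p <= n)%N /\ (i + p.+1 <= n)%N by lia.
have := subdet_desnanot_jacobi Di0.
rewrite Di Di1 -/X (a'E _ i.+1 p) ?size_iota //.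
rewrite !(a'E _ i p.+1) ?size_iota ?size_cons // -/P -/Q -/R => jacobi.
exact: jacobi_ratio ai1n0 P0 Q0 jacobi.
Qed.
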